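(* Suppose we are given six bases of $V$, called basis 1, …, basis 6. The following are equivalent: (i) the transition matrix from basis 1 to basis 2, from basis 3 to basis 4, and from basis 5 to basis 6 is upper triangular Toeplitz, and the transition matrix from basis 2 to basis 3, from basis 4 to basis 5, and from basis 6 to basis 1 is antidiagonal; (ii) there exists an LR triple $A,B,C$ on $V$ such that basis 1, 2, 3, 4, 5, 6 is an $(A,C)$-basis, $(A,B)$-basis, $(B,A)$-basis, $(B,C)$-basis, $(C,B)$-basis, $(C,A)$-basis of $V$, respectively. If (i), (ii) hold, then the LR triple $A,B,C$ is uniquely determined by the six bases.
   Context: Let $V$ be a vector space over a field $\mathbb F$ with $\dim V=d+1$, $d\ge0$; matrices are indexed by $0,\dots,d$. The transition matrix from a basis $(u_i)$ to a basis $(v_i)$ is $S$ with $v_k=\sum_iS_{ik}u_i$. A matrix is upper triangular Toeplitz if its $(i,k)$-entry is $\gamma_{k-i}$ for $i\le k$ and $0$ for $i>k$, for some scalars $\gamma_0,\dots,\gamma_d$; it is antidiagonal if its $(i,k)$-entry is $0$ whenever $i+k\ne d$. A decomposition of $V$ is a sequence $(V_i)_{i=0}^d$ of one-dimensional subspaces with $V=\bigoplus V_i$; $X$ lowers it if $XV_i=V_{i-1}$ ($1\le i\le d$), $XV_0=0$; raises it if $XV_i=V_{i+1}$ ($0\le i\le d-1$), $XV_d=0$. An ordered pair $X,Y$ is an LR pair if some decomposition (unique, the $(X,Y)$-decomposition) is lowered by $X$ and raised by $Y$. An LR triple is $A,B,C\in\mathrm{End}(V)$ such that every ordered pair of distinct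 elements among $A,B,C$ is an LR pair. For an LR pair $X,Y$, an $(X,Y)$-basis is a basis $(v_i)$ with $v_i$ in the $i$-th component of the $(X,Y)$-decomposition and $Xv_i=v_{i-1}$ for $1\le i\le d$. *)

From HB Require Import structures.
From mathcomp Require Import all_boot all_order all_algebra.
Set Implicit Arguments. Unset Strict Implicit. Unset Printing Implicit Defensive.
Import GRing.Theory.
Local Open Scope ring_scope.

Section LR.
Variables (F : fieldType) (V : vectType F) (d : nat).

Definition transition (u v : (d.+1).-tuple V) : 'M[F]_(d.+1) :=
  \matrix_(i < d.+1, k < d.+1) coord u i (tnth v k).

Definition upper_toeplitz (S : 'M[F]_(d.+1)) : Prop :=
  exists gamma : nat -> F, forall i k : 'I_(d.+1),
    S i k = if (i <= k)%N then gamma (k - i)%N else 0.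

Definition antidiagonal (S : 'M[F]_(d.+1)) : Prop :=
  forall i k : 'I_(d.+1), (i + k != d)%N -> S i k = 0.

(* A decomposition (V_i)_{i=0..d}; indices are naturals, only 0..d matter. *)
Definition decomposition (Vs : nat -> {vspace V}) : Prop :=
  [/\ forall i, (i <= d)%N -> \dim (Vs i) = 1%N,
      directv (\sum_(i < d.+1) Vs i)%VS
    & (\sum_(i < d.+1) Vs i)%VS = fullv].

Definition lowers (X : 'End(V)) (Vs : nat -> {vspace V}) : Prop :=
  (forall i, (1 <= i <= d)%N -> (X @: Vs i)%VS = Vs i.-1) /\
  (X @: Vs 0%N)%VS = 0%VS.

Definition raises (X : 'End(V)) (Vs : nat -> {vspace V}) : Prop :=
  (forall i, (i < d)%N -> (X @: Vs i)%VS = Vs i.+1) /\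
  (X @: Vs d)%VS = 0%VS.

Definition LR_pair (X Y : 'End(V)) : Prop :=
  exists Vs, [/\ decomposition Vs, lowers X Vs & raises Y Vs].

Definition LR_triple (A B C : 'End(V)) : Prop :=
  [/\ LR_pair A B /\ LR_pair B A, LR_pair A C /\ LR_pair C A
    & LR_pair B C /\ LR_pair C B].

(* (X,Y)-basis: v_i lies in the i-th component of the (X,Y)-decomposition
   (which is unique, so "some" = "the") and X v_i = v_{i-1}. *)
Definition XY_basis (X Y : 'End(V)) (v : (d.+1).-tuple V) : Prop :=
  basis_of fullv v /\
  exists Vs, [/\ decomposition Vs, lowers X Vs, raises Y Vs,
    (forall i, (i <= d)%N -> v`_i \in Vs i)
    & (forall i, (1 <= i <= d)%N -> X v`_i = v`_i.-1)].

End LR.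

(* Two bases lowered
   by the same X differ by a polynomial in X, i.e. by an upper triangular
   Toeplitz matrix; an (X,Y)-basis and a (Y,X)-basis run through the same lines
   in opposite orders, so their transition matrix is antidiagonal.  Conversely,
   let A, B, C be the lowering maps of bases 1, 3, 5: the Toeplitz conditions
   make them lower bases 2, 4, 6 as well, and the antidiagonal conditions turn
   each basis, reversed and rescaled, into a basis raised by the third map.
   Uniqueness holds because a lowering map is determined by its action on a
   basis. *)

From HB Require Import structures.
From mathcomp Require Import all_boot all_order all_algebra.
From mathcomp Require Import zify.
Set Implicit Arguments. Unset Strict Implicit. Unset Printing Implicit Defensive.
Import GRing.Theory.
Local Open Scope ring_scope.

Section Lines.
Variables (F : fieldType) (V : vectType F).

Lemma vlineZ (c : F) (x : V) : c != 0 -> (<[c *: x]> = <[x]>)%VS.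
Proof.
move=> c_neq0; apply/subv_anti/andP; split; rewrite -memvE.
  by rewrite memvZ // memv_line.
by rewrite -{1}[x](scalerK c_neq0) memvZ // memv_line.
Qed.

Lemma dimv1_vline (U : {vspace V}) x :
  x \in U -> x != 0 -> \dim U = 1%N -> U = <[x]>%VS.
Proof.
by move=> xU x_neq0 dimU; apply/esym/eqP; rewrite eqEdim -memvE xU dim_vline x_neq0 dimU.
Qed.

End Lines.

Section LRBases.
Variables (F : fieldType) (V : vectType F) (d : nat).
Implicit Types (u v w : (d.+1).-tuple V) (X Y Z : 'End(V)).

Lemma basis_nth_neq0 u i : basis_of fullv u -> (i <= d)%N -> u`_i != 0.
Proof.
by move=> hu hi; apply: (free_not0 (basis_free hu)); rewrite mem_nth ?size_tuple.
Qed.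

Lemma decomposition_vlines v :
  basis_of fullv v -> decomposition d (fun i => <[v`_i]>%VS).
Proof.
move=> hv; split.
- by move=> i hi; rewrite dim_vline basis_nth_neq0.
- apply/directv_sum_independent => us us_in sum_us0 i _.
  have us_coord j : us j = coord v j (us j) *: v`_j.
    have [c ->] := vlineP _ _ (us_in j isT).
    by rewrite linearZ /= coord_free ?(basis_free hv) // eqxx mulr1.
  have /freeP/(_ (fun j => coord v j (us j))) coord0 := basis_free hv.
  rewrite us_coord coord0 ?scale0r //.
  by rewrite -[RHS]sum_us0; apply: eq_bigr => j _; rewrite -us_coord.
- rewrite -(span_basis hv) span_def big_tuple.
  by apply: eq_bigr => i _; rewrite (tnth_nth 0).
Qed.

Definition lowers_tuple X u :=
  (forall i, (1 <= i <= d)%N -> X u`_i = u`_i.-1) /\ X u`_0 = 0.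

Definition raises_tuple Y u :=
  (forall i, (i < d)%N -> <[Y u`_i]>%VS = <[u`_i.+1]>%VS) /\ Y u`_d = 0.

Lemma XY_basisP X Y v :
  XY_basis X Y v <-> [/\ basis_of fullv v, lowers_tuple X v & raises_tuple Y v].
Proof.
split=> [[hv [Vs [[dimVs _ _] [_ lowX0] [raiseY raiseYd] v_in lowXv]]]
        | [hv lowXv [raiseYv raiseYvd]]].
  have Vs_line i : (i <= d)%N -> Vs i = <[v`_i]>%VS.
    by move=> hi; apply: dimv1_vline; rewrite ?v_in ?basis_nth_neq0 ?dimVs.
  have img_zero Z i : (i <= d)%N -> (Z @: Vs i = 0)%VS -> Z v`_i = 0.
    by move=> hi ZVs0; apply/eqP; rewrite -memv0 -ZVs0 memv_img ?v_in.
  split=> //; split; rewrite ?img_zero // => i hi.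
  by rewrite -limg_line -Vs_line ?raiseY ?Vs_line //; apply: ltnW.
split=> //; exists (fun i => <[v`_i]>%VS); split.
- exact: decomposition_vlines.
- by case: lowXv => lowXv lowXv0; split=> [i hi|]; rewrite limg_line ?lowXv0 ?lowXv.
- by split=> [i hi|]; rewrite limg_line ?raiseYvd ?raiseYv.
- by move=> i _; apply: memv_line.
- by case: lowXv.
Qed.

Lemma LR_pair_of_XY_basis X Y v : XY_basis X Y v -> LR_pair d X Y.
Proof. by case=> _ [Vs [? ? ? _ _]]; exists Vs. Qed.

(* Coordinates indexed by [nat]; for [i > d], [inord i] silently falls back to [0]. *)
Definition coordn u (i : nat) (x : V) : F := coord u (inord i) x.

Lemma transitionE u v (i k : 'I_d.+1) : transition u v i k = coordn u i v`_k.
Proof. by rewrite mxE (tnth_nth 0) /coordn inord_val. Qed.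

Lemma coordn_nth u i j : free u -> (i <= d)%N -> (j <= d)%N ->
  coordn u j u`_i = (i == j)%:R.
Proof.
move=> free_u hi hj; rewrite /coordn -[i](@inordK d) // coord_free //.
by rewrite -(inj_eq val_inj) /= !inordK.
Qed.

Lemma coordn_inj u x y : basis_of fullv u ->
  (forall j, (j <= d)%N -> coordn u j x = coordn u j y) -> x = y.
Proof.
move=> hu eq_xy; rewrite (coord_basis hu (memvf x)) (coord_basis hu (memvf y)).
by apply: eq_bigr => i _; have := eq_xy i (ltn_ord i); rewrite /coordn inord_val => ->.
Qed.

Lemma coordn_lowers X u x j : basis_of fullv u -> lowers_tuple X u -> (j <= d)%N ->
  coordn u j (X x) = if (j < d)%N then coordn u j.+1 x else 0.
Proof.
move=> hu [lowXu lowXu0] hj.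
have -> : X x = \sum_(i < d.+1) (if (i < d)%N then coordn u i.+1 x else 0) *: u`_i.
  rewrite {1}(coord_basis hu (memvf x)) linear_sum big_ord_recl big_ord_recr /=.
  rewrite linearZ /= lowXu0 scaler0 add0r ltnn scale0r addr0.
  apply: eq_bigr => i _; rewrite linearZ /= lowXu ?ltn_ord //= /coordn.
  by congr (coord _ _ _ *: _); apply: val_inj; rewrite /= inordK // ltnS.
by rewrite /coordn coord_sum_free ?(basis_free hu) // inordK.
Qed.

Lemma upper_toeplitz_transitionE u v : upper_toeplitz (transition u v) <->
  exists g : nat -> F, forall i k, (i <= d)%N -> (k <= d)%N ->
    coordn u i v`_k = if (i <= k)%N then g (k - i)%N else 0.
Proof.
split=> [[g hg] | [g hg]]; exists g.
  by move=> i k hi hk; have := hg (inord i) (inord k); rewrite transitionE !inordK.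
by move=> i k; rewrite transitionE hg //; apply: leq_ord.
Qed.

Lemma upper_toeplitz_transitionP X u v : basis_of fullv u -> lowers_tuple X u ->
  upper_toeplitz (transition u v) <-> lowers_tuple X v.
Proof.
move=> hu lowXu; rewrite upper_toeplitz_transitionE.
split=> [[g hg] | [lowXv lowXv0]].
  split=> [i hi|]; apply: (coordn_inj hu) => j hj; rewrite coordn_lowers //.
    case: ltnP => hjd; rewrite !hg //; try lia.
      by congr (if _ then g _ else _); lia.
    by rewrite ifF //; lia.
  by rewrite [RHS]/coordn linear0; case: ltnP => // hjd; rewrite hg.
pose t i k := coordn u i v`_k.
have t_shift j k : (j < d)%N -> (1 <= k <= d)%N -> t j k.-1 = t j.+1 k.
  by move=> hj hk; rewrite /t -lowXv // coordn_lowers ?hj // ltnW.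
have t_col0 j : (j < d)%N -> t j.+1 0%N = 0.
  move=> hj; have := coordn_lowers v`_0 hu lowXu (ltnW hj).
  by rewrite /t lowXv0 hj {1}/coordn linear0 => <-.
have t_toeplitz i k : (i <= d)%N -> (k <= d)%N ->
    t i k = if (i <= k)%N then t 0%N (k - i)%N else 0.
  elim: i k => [|i IHi] [|k] hi hk; rewrite ?subn0 ?t_col0 //.
  by rewrite -t_shift ?IHi //=; apply: ltnW.
by exists (t 0%N).
Qed.

Lemma lowers_tuple_uniq X X' u : basis_of fullv u ->
  lowers_tuple X u -> lowers_tuple X' u -> X = X'.
Proof.
move=> hu [lowX lowX0] [lowX' lowX'0].
apply/(fullv_lfunP _ _ (span_basis hu)) => x /(nthP 0) [[|i] hi <-].
  by rewrite lowX0 lowX'0.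
by rewrite size_tuple in hi; rewrite lowX ?lowX'.
Qed.

Lemma exists_lowers_tuple u : basis_of fullv u -> exists X, lowers_tuple X u.
Proof.
move=> hu; have [f hf] := linear_of_free u (0 :: take d u).
have uf : map f u = 0 :: take d u.
  by rewrite hf ?(basis_free hu) //= size_take size_tuple ltnSn.
have fu i : (i <= d)%N -> linfun f u`_i = (0 :: take d u)`_i.
  by move=> hi; rewrite lfunE -uf (nth_map 0) ?size_tuple.
exists (linfun f); split; last by rewrite fu.
by move=> [|i] hi //; rewrite fu //= nth_take.
Qed.

Lemma lowers_tuple_ker X u y : basis_of fullv u -> lowers_tuple X u ->
  X y = 0 -> y \in <[u`_0]>%VS.
Proof.
move=> hu lowXu Xy0.
have coord_y j : (j < d)%N -> coordn u j.+1 y = 0.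
  move=> hj; have := coordn_lowers y hu lowXu (ltnW hj).
  by rewrite Xy0 hj /coordn linear0.
rewrite (coord_basis hu (memvf y)) big_ord_recl big1 ?addr0 ?memvZ ?memv_line // => i _.
have -> : lift ord0 i = inord i.+1 by apply: val_inj; rewrite /= inordK // ltnS.
by rewrite [coord _ _ _]coord_y ?scale0r.
Qed.

Definition rev_proportional u w :=
  forall k, (k <= d)%N -> exists2 t : F, t != 0 & w`_k = t *: u`_(d - k).

Lemma rev_proportional_sym u w : rev_proportional u w -> rev_proportional w u.
Proof.
move=> revuw k hk; have [t t_neq0 wE] := revuw (d - k)%N (leq_subr _ _).
exists t^-1; first by rewrite invr_eq0.
by rewrite wE subKn // scalerA mulVf // scale1r.
Qed.

Lemma antidiagonal_transitionP u w : basis_of fullv u -> basis_of fullv w ->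
  antidiagonal (transition u w) <-> rev_proportional u w.
Proof.
move=> hu hw; split=> [antiA k hk | revuw i k hik].
  have wk := coord_basis hu (memvf w`_k).
  rewrite (bigD1 (inord (d - k))) //= big1 ?addr0 in wk; last first.
    move=> i i_neq; have := antiA i (inord k).
    rewrite transitionE /coordn inord_val inordK //.
    move=> ->; first by rewrite scale0r.
    by apply: contra i_neq => /eqP ik; apply/eqP/val_inj; rewrite /= inordK; lia.
  rewrite inordK ?ltnS ?leq_subr // in wk.
  exists (coord u (inord (d - k)) w`_k) => //.
  by apply: contraNneq (basis_nth_neq0 hw hk) => t0; rewrite wk t0 scale0r.
rewrite transitionE; have [t _ ->] := revuw k (leq_ord k).
rewrite /coordn linearZ /= -/(coordn _ _ _).
rewrite coordn_nth ?(basis_free hu) ?leq_subr ?leq_ord //.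
have kd := ltn_ord k; rewrite (_ : _ == _ = false) ?mulr0 //.
by apply: contraNF hik => /eqP <-; lia.
Qed.

Lemma raises_tuple_of_rev_proportional X u w :
  lowers_tuple X u -> rev_proportional u w -> raises_tuple X w.
Proof.
move=> [lowXu lowXu0] revuw; split=> [k hk|].
  have [t t_neq0 ->] := revuw k (ltnW hk); have [t' t'_neq0 ->] := revuw k.+1 hk.
  rewrite linearZ /= lowXu; last lia.
  by rewrite !vlineZ // (_ : (d - k).-1 = d - k.+1)%N //; lia.
by have [t _ ->] := revuw d (leqnn d); rewrite subnn linearZ /= lowXu0 scaler0.
Qed.

Lemma rev_proportional_of_lowers_raises X Y u w :
  basis_of fullv u -> basis_of fullv w -> lowers_tuple X u -> raises_tuple Y u ->
  lowers_tuple Y w -> raises_tuple X w -> rev_proportional u w.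
Proof.
move=> hu hw lowXu [raiseYu _] [lowYw _] [_ Xwd0].
have w_in j : (j <= d)%N -> w`_(d - j) \in <[u`_j]>%VS.
  elim: j => [|j IHj] hj; first by rewrite subn0 (lowers_tuple_ker hu lowXu Xwd0).
  rewrite (_ : w`_(d - j.+1) = Y w`_(d - j)); last first.
    by rewrite lowYw; [congr nth; lia | lia].
  case/vlineP: (IHj (ltnW hj)) => a ->.
  by rewrite linearZ memvZ // -raiseYu // memv_line.
move=> k hk; have [t wk] := vlineP _ _ (w_in (d - k)%N (leq_subr _ _)).
rewrite subKn // in wk; exists t => //.
by apply: contraNneq (basis_nth_neq0 hw hk) => t0; rewrite wk t0 scale0r.
Qed.

Lemma XY_basis_of_rev_proportional X Y u v : basis_of fullv v ->
  lowers_tuple X v -> lowers_tuple Y u -> rev_proportional u v -> XY_basis X Y v.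
Proof.
move=> hv lowXv lowYu revuv; apply/XY_basisP; split=> //.
exact: raises_tuple_of_rev_proportional revuv.
Qed.

Lemma upper_toeplitz_transition_XY_bases X Y Z u v :
  XY_basis X Y u -> XY_basis X Z v -> upper_toeplitz (transition u v).
Proof.
move=> /XY_basisP[hu lowXu _] /XY_basisP[_ lowXv _].
exact/(upper_toeplitz_transitionP _ hu lowXu).
Qed.

Lemma antidiagonal_transition_XY_bases X Y u w :
  XY_basis X Y u -> XY_basis Y X w -> antidiagonal (transition u w).
Proof.
move=> /XY_basisP[hu lowXu raiseYu] /XY_basisP[hw lowYw raiseXw].
apply/(antidiagonal_transitionP hu hw).
exact: rev_proportional_of_lowers_raises lowXu raiseYu lowYw raiseXw.
Qed.

Lemma XY_basis_lowering_uniq X X' Y Y' v :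
  XY_basis X Y v -> XY_basis X' Y' v -> X = X'.
Proof.
move=> /XY_basisP[hv lowXv _] /XY_basisP[_ lowX'v _].
exact: lowers_tuple_uniq hv lowXv lowX'v.
Qed.

End LRBases.

Theorem theorem34p1 (F : fieldType) (V : vectType F) (d : nat)
  (hdim : \dim (fullv : {vspace V}) = d.+1)
  (b1 b2 b3 b4 b5 b6 : (d.+1).-tuple V)
  (hb1 : basis_of fullv b1) (hb2 : basis_of fullv b2)
  (hb3 : basis_of fullv b3) (hb4 : basis_of fullv b4)
  (hb5 : basis_of fullv b5) (hb6 : basis_of fullv b6) :
  let P := fun A B C : 'End(V) =>
    [/\ LR_triple d A B C,
        XY_basis A C b1 /\ XY_basis A B b2, XY_basis B A b3 /\ XY_basis B C b4
      & XY_basis C B b5 /\ XY_basis C A b6] in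
  ([/\ upper_toeplitz (transition b1 b2), upper_toeplitz (transition b3 b4)
     & upper_toeplitz (transition b5 b6)] /\
   [/\ antidiagonal (transition b2 b3), antidiagonal (transition b4 b5)
     & antidiagonal (transition b6 b1)]
   <-> exists A B C, P A B C)
  /\ (forall A B C A' B' C', P A B C -> P A' B' C' ->
        [/\ A = A', B = B' & C = C']).
Proof.
move=> P; split; last first.
  move=> A B C A' B' C' [_ [x1 _] [x3 _] [x5 _]] [_ [y1 _] [y3 _] [y5 _]].
  by split; apply: XY_basis_lowering_uniq; eassumption.
split=> [[[t12 t34 t56] [a23 a45 a61]] | [A [B [C [_ [x1 x2] [x3 x4] [x5 x6]]]]]].
  have [A lowA1] := exists_lowers_tuple hb1.
  have [B lowB3] := exists_lowers_tuple hb3.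
  have [C lowC5] := exists_lowers_tuple hb5.
  have lowA2 := (upper_toeplitz_transitionP _ hb1 lowA1).1 t12.
  have lowB4 := (upper_toeplitz_transitionP _ hb3 lowB3).1 t34.
  have lowC6 := (upper_toeplitz_transitionP _ hb5 lowC5).1 t56.
  have r23 := (antidiagonal_transitionP hb2 hb3).1 a23.
  have r45 := (antidiagonal_transitionP hb4 hb5).1 a45.
  have r61 := (antidiagonal_transitionP hb6 hb1).1 a61.
  have x1 := XY_basis_of_rev_proportional hb1 lowA1 lowC6 r61.
  have x2 := XY_basis_of_rev_proportional hb2 lowA2 lowB3 (rev_proportional_sym r23).
  have x3 := XY_basis_of_rev_proportional hb3 lowB3 lowA2 r23.
  have x4 := XY_basis_of_rev_proportional hb4 lowB4 lowC5 (rev_proportional_sym r45).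
  have x5 := XY_basis_of_rev_proportional hb5 lowC5 lowB4 r45.
  have x6 := XY_basis_of_rev_proportional hb6 lowC6 lowA1 (rev_proportional_sym r61).
  exists A, B, C; split=> //.
  by split; split; apply: LR_pair_of_XY_basis; eassumption.
split; split.
- exact: upper_toeplitz_transition_XY_bases x1 x2.
- exact: upper_toeplitz_transition_XY_bases x3 x4.
- exact: upper_toeplitz_transition_XY_bases x5 x6.
- exact: antidiagonal_transition_XY_bases x2 x3.
- exact: antidiagonal_transition_XY_bases x4 x5.
- exact: antidiagonal_transition_XY_bases x6 x1.
Qed.
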